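(* Fix a CW structure on $\mathbb{R}$ and an open subspace $P\subset\mathbb{R}^n\times\mathbb{R}$, regarded as a space over $\mathbb{R}$ via the projection $\tau_P$ onto the last coordinate. Then the natural function $$\Gamma_P(\mathbb{R})\longrightarrow\lim_c\pi_0\Gamma_P(c),$$ where $c$ ranges over the closed cells of $\mathbb{R}$ (ordered by reverse inclusion, with restriction maps), is surjective.
   Context: For a subset $A\subset\mathbb{R}$, $\Gamma_P(A)$ is the space (compact-open topology) of sections of $\tau_P$ over $A$, i.e. continuous maps $s\colon A\to P$ with $\tau_P\circ s=\mathrm{id}_A$; $\pi_0$ denotes the set of path components. The map sends a global section to the family of path components of its restrictions to the closed cells. *)

From HB Require Import structures.
From mathcomp Require Import all_boot all_order all_algebra.
From mathcomp Require Import all_classical all_reals all_analysis.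
Set Implicit Arguments. Unset Strict Implicit. Unset Printing Implicit Defensive.
Import Order.TTheory GRing.Theory Num.Theory.
Import numFieldNormedType.Exports.
Local Open Scope classical_set_scope.
Local Open Scope ring_scope.

(* A CW structure on R is determined by its set V of 0-cells: a closed
   discrete (= locally finite) subset of R, unbounded in both directions
   (so that the 1-cells, the open intervals between consecutive vertices,
   are bounded and cover the complement of V). *)
Definition CW_structure_R {R : realType} (V : set R) : Prop :=
  [/\ (forall a b : R, finite_set (V `&` `[a, b]%classic)),
      (forall x : R, exists2 v, V v & x < v) &
      (forall x : R, exists2 v, V v & v < x)].

Definition closed_cell {R : realType} (V : set R) (c : set R) : Prop :=
  (exists2 v, V v & c = [set v]) \/
  (exists v w, [/\ V v, V w, v < w,
     (forall x, V x -> ~ (v < x < w)) & c = `[v, w]%classic]).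

Definition maps_sp {R : realType} (n : nat) (A : set R) (P : set ('rV[R]_n * R)) :=
  {compact-open, set_type A -> set_type P}.

Definition Gamma {R : realType} (n : nat) (P : set ('rV[R]_n * R)) (A : set R)
  : set (maps_sp A P) :=
  [set s | continuous (s : set_type A -> set_type P) /\
           forall t : set_type A, (set_val (s t)).2 = set_val t].

Definition same_path_component {R : realType} {X : topologicalType} (G : set X)
  (f g : X) : Prop :=
  exists gam : R -> X,
    [/\ {within `[0, 1]%classic, continuous gam},
        (forall u, `[0, 1]%classic u -> G (gam u)),
        gam 0 = f & gam 1 = g].

Definition incl {T : Type} (A B : set T) (h : A `<=` B) : set_type A -> set_type B :=
  fun x => exist _ (set_val x) (mem_set (h _ (set_mem (valP x)))).

Definition restr {R : realType} (n : nat) (P : set ('rV[R]_n * R)) (A' A : set R)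
  (h : A' `<=` A) (s : maps_sp A P) : maps_sp A' P :=
  fun x => s (incl h x).

Arguments Gamma {R n} P A _.
Arguments same_path_component {R X} G f g.

From Pilot Require Import Defs.
From HB Require Import structures.
From mathcomp Require Import all_boot all_order all_algebra.
From mathcomp Require Import all_classical all_reals all_analysis.
From mathcomp Require Import lra.
Import Order.TTheory GRing.Theory Num.Theory.
Import numFieldNormedType.Exports.
Local Open Scope classical_set_scope.
Local Open Scope ring_scope.

(* Over a closed edge [v, w], the section sigma [v, w] together with the paths
   joining its endpoint values to sigma {v} and sigma {w} (inside the fibres over
   v and w) concatenate into a map Psi on [v - 1, w + 1] with (Psi y, clamp v w y)
   in P.  P being open and [v - 1, w + 1] compact, P contains a uniform vertical
   neighbourhood of this graph, so reading Psi at points pushed outwards near the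
   ends of the edge deforms sigma [v, w], through sections, into a section with the
   vertex values of sigma {v} and sigma {w}.  These deformed edge sections agree
   at the vertices and glue to a global section; running the deformations
   backwards gives the required paths. *)

Section ContinuousFunctions.
Context {R : realType}.

Lemma continuous_compose {T U W : topologicalType} {f : T -> U} {g : U -> W} :
  continuous f -> continuous g -> continuous (fun x => g (f x)).
Proof. by move=> cf cg x; apply: continuous_comp; [exact: cf | exact: cg]. Qed.

Lemma continuous_pair {T U W : topologicalType} {f : T -> U} {g : T -> W} :
  continuous f -> continuous g -> continuous (fun x => (f x, g x)).
Proof. by move=> cf cg x; apply: cvg_pair; [exact: cf | exact: cg]. Qed.

Lemma continuous_fst {U W : topologicalType} : continuous (@fst U W).
Proof. by move=> [x y]; exact: cvg_fst. Qed.

Lemma continuous_snd {U W : topologicalType} : continuous (@snd U W).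
Proof. by move=> [x y]; exact: cvg_snd. Qed.

Lemma continuous_idfun {T : topologicalType} : continuous (fun x : T => x).
Proof. by move=> x; exact: cvg_id. Qed.

Lemma continuous_addf {T : topologicalType} {X : normedModType R} {f g : T -> X} :
  continuous f -> continuous g -> continuous (fun x => f x + g x).
Proof. by move=> cf cg x; exact: cvgD (cf x) (cg x). Qed.

Lemma continuous_subf {T : topologicalType} {X : normedModType R} {f g : T -> X} :
  continuous f -> continuous g -> continuous (fun x => f x - g x).
Proof. by move=> cf cg x; exact: cvgB (cf x) (cg x). Qed.

Lemma continuous_mulf {T : topologicalType} {f g : T -> R} :
  continuous f -> continuous g -> continuous (fun x => f x * g x).
Proof. by move=> cf cg x; exact: cvgM (cf x) (cg x). Qed.

Lemma continuous_minf {T : topologicalType} {f g : T -> R} :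
  continuous f -> continuous g -> continuous (fun x => Num.min (f x) (g x)).
Proof. by move=> cf cg x; exact: continuous_min (cf x) (cg x). Qed.

Lemma continuous_maxf {T : topologicalType} {f g : T -> R} :
  continuous f -> continuous g -> continuous (fun x => Num.max (f x) (g x)).
Proof. by move=> cf cg x; exact: continuous_max (cf x) (cg x). Qed.

Lemma continuous_set_val {T : topologicalType} (A : set T) :
  continuous (fun x : set_type A => set_val x).
Proof. exact: initial_continuous. Qed.

Lemma continuous_into_subspace {T U : topologicalType} {A : set U} {f : T -> U}
    (fA : forall x, A (f x)) :
  continuous f -> continuous (fun x => exist _ (f x) (mem_set (fA x)) : set_type A).
Proof. by move=> cf; apply: continuous_comp_initial. Qed.

End ContinuousFunctions.

Section Clamp.
Context {R : realType}.
Implicit Types a b x y t eta d : R.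

Definition clamp a b y := Num.min (Num.max y a) b.

Lemma clamp_itv {a b} y : a <= b -> a <= clamp a b y <= b.
Proof.
move=> ab; rewrite /clamp; apply/andP; split.
  by rewrite le_min ab le_max lexx orbT.
by rewrite ge_min lexx orbT.
Qed.

Lemma clamp_id {a b y} : a <= y <= b -> clamp a b y = y.
Proof. by move=> /andP[ay yb]; rewrite /clamp (max_l ay) (min_l yb). Qed.

Lemma clamp_left {a b} y : a <= b -> y <= a -> clamp a b y = a.
Proof. by move=> ab ya; rewrite /clamp (max_r ya) (min_l ab). Qed.

Lemma clamp_right {a b} y : a <= b -> b <= y -> clamp a b y = b.
Proof. by move=> ab bley; rewrite /clamp (max_l (le_trans ab bley)) (min_r bley). Qed.

Lemma continuous_clamp a b : continuous (clamp a b).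
Proof.
apply: continuous_minf; last exact: cst_continuous.
by apply: continuous_maxf; [exact: continuous_idfun | exact: cst_continuous].
Qed.

Lemma clamp_shift a b x t eta : a <= x <= b -> 0 < eta ->
  (t < 0 -> x - a < eta) -> (0 < t -> b - x < eta) ->
  `|clamp a b (x + t) - x| < eta.
Proof.
move=> /andP[ax xb] eta0 tneg tpos.
have /andP[ac cb] := clamp_itv (x + t) (le_trans ax xb).
rewrite ltr_norml; have [t0|t0|->] := ltgtP t 0.
- have cx : clamp a b (x + t) <= x.
    by rewrite /clamp ge_min ge_max ax andbT; apply/orP; left; lra.
  by have := tneg t0; move=> ?; apply/andP; split; lra.
- have xc : x <= clamp a b (x + t).
    by rewrite /clamp le_min le_max xb andbT; apply/orP; left; lra.
  by have := tpos t0; move=> ?; apply/andP; split; lra.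
- by rewrite addr0 clamp_id ?ax // subrr; apply/andP; split; lra.
Qed.

End Clamp.

Section Tent.
Context {R : realType}.
Implicit Types v w x d eta : R.

Definition ramp eta d := Num.max 0 (1 - d / eta).

Definition tent v w eta x := ramp eta (w - x) - ramp eta (x - v).

Lemma ramp_ge0 eta d : 0 <= ramp eta d.
Proof. by rewrite le_max lexx. Qed.

Lemma ramp_le1 {eta d} : 0 < eta -> 0 <= d -> ramp eta d <= 1.
Proof.
move=> eta0 d0; rewrite ge_max ler01 gerBl.
by apply: divr_ge0 => //; exact: ltW.
Qed.

Lemma ramp_gt0 {eta d} : 0 < eta -> 0 < ramp eta d -> d < eta.
Proof.
move=> eta0; rewrite lt_max ltxx /= subr_gt0.
by rewrite ltr_pdivrMr // mul1r.
Qed.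

Lemma ramp0 eta : ramp eta 0 = 1.
Proof. by rewrite /ramp mul0r subr0 (max_r ler01). Qed.

Lemma ramp_eq0 {eta d} : 0 < eta -> eta <= d -> ramp eta d = 0.
Proof. by move=> eta0 ed; apply: max_l; rewrite subr_le0 ler_pdivlMr // mul1r. Qed.

Lemma continuous_tent v w eta : continuous (tent v w eta).
Proof.
have cramp (f : R -> R) : continuous f -> continuous (fun x => ramp eta (f x)).
  move=> cf; apply: continuous_maxf; first exact: cst_continuous.
  apply: continuous_subf; first exact: cst_continuous.
  by apply: continuous_mulf => //; exact: cst_continuous.
apply: continuous_subf; apply: cramp; apply: continuous_subf;
  (exact: continuous_idfun || exact: cst_continuous).
Qed.

Lemma tent_bounds {v w eta x} : 0 < eta -> v <= x <= w -> -1 <= tent v w eta x <= 1.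
Proof.
move=> eta0 /andP[vx xw].
have := @ramp_le1 eta (w - x) eta0 ltac:(by rewrite subr_ge0).
have := @ramp_le1 eta (x - v) eta0 ltac:(by rewrite subr_ge0).
have := ramp_ge0 eta (w - x); have := ramp_ge0 eta (x - v).
by rewrite /tent => *; apply/andP; split; lra.
Qed.

Lemma tent_lt0 {v w eta x} : 0 < eta -> tent v w eta x < 0 -> x - v < eta.
Proof.
move=> eta0; rewrite subr_lt0 => lt; apply: ramp_gt0 => //.
exact: le_lt_trans (ramp_ge0 _ _) lt.
Qed.

Lemma tent_gt0 {v w eta x} : 0 < eta -> 0 < tent v w eta x -> w - x < eta.
Proof.
move=> eta0; rewrite subr_gt0 => lt; apply: ramp_gt0 => //.
exact: le_lt_trans (ramp_ge0 _ _) lt.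
Qed.

Lemma tent_left {v w eta} : 0 < eta -> eta <= w - v -> tent v w eta v = -1.
Proof. by move=> eta0 ewv; rewrite /tent subrr ramp0 ramp_eq0 // sub0r. Qed.

Lemma tent_right {v w eta} : 0 < eta -> eta <= w - v -> tent v w eta w = 1.
Proof. by move=> eta0 ewv; rewrite /tent subrr ramp0 ramp_eq0 // subr0. Qed.

Lemma clamp_tent_shift {v w eta x l} : 0 < eta -> v <= x <= w -> 0 <= l <= 1 ->
  let y := x + l * tent v w eta x in
  v - 1 <= y <= w + 1 /\ `|clamp v w y - x| < eta.
Proof.
move=> eta0 xvw /andP[l0 l1] y.
have /andP[t_ge t_le] := tent_bounds eta0 xvw.
have /andP[vx xw] := xvw.
split; first by rewrite /y; apply/andP; split; nra.
apply: clamp_shift => // [lt|gt].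
- apply: (@tent_lt0 v w eta x eta0); rewrite ltNge; apply: contraTN lt => t0.
  by rewrite -leNgt mulr_ge0.
- apply: (@tent_gt0 v w eta x eta0); rewrite ltNge; apply: contraTN gt => t0.
  by rewrite -leNgt mulr_ge0_le0.
Qed.

End Tent.

Section EdgeHomotopy.
Context {R : realType}.

Lemma open_tube_segment {X : topologicalType} (P : set (X * R)) (Phi : R -> X * R)
    (a b : R) :
  continuous Phi -> open P -> (forall y, a <= y <= b -> P (Phi y)) ->
  exists2 e : R, 0 < e & forall y t, a <= y <= b -> `|t| < e ->
    P ((Phi y).1, (Phi y).2 + t).
Proof.
move=> cPhi oP abP.
pose f (z : R * R) := ((Phi z.2).1, (Phi z.2).2 + z.1).
have cf : continuous f.
  have cPhi2 : continuous (fun z : R * R => Phi z.2).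
    exact: continuous_compose continuous_snd cPhi.
  apply: continuous_pair; first exact: continuous_compose cPhi2 continuous_fst.
  apply: continuous_addf; last exact: continuous_fst.
  exact: continuous_compose cPhi2 continuous_snd.
(* [curry f] is continuous into the compact-open topology, where the maps sending
   the compact [a, b] into P form an open set; this makes the shift uniform. *)
have oU : open ([set g | g @` `[a, b] `<=` P] : set {compact-open, R -> (X * R)%type}).
  by apply: compact_open_open => //; exact: segment_compact.
have f0U : curry f 0 @` `[a, b] `<=` P.
  move=> _ [y /= aby <-]; rewrite /curry /f /= addr0 -surjective_pairing.
  by apply: abP; move: aby; rewrite in_itv.
have := continuous_curry_fun cf (open_nbhs_nbhs (conj oU f0U)).
move=> /nbhs_ballP [e e0 eU]; exists e => // y t aby te.
have /eU /= : ball (0 : R) e t by rewrite /ball /= sub0r normrN.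
by apply; exists y => //; rewrite in_itv.
Qed.

Lemma concatenated_section {X : normedModType R} {P : set (X * R)} {v w : R}
    {E A B : R -> X} :
  v <= w -> continuous E -> continuous A -> continuous B ->
  (forall x, v <= x <= w -> P (E x, x)) ->
  (forall u, 0 <= u <= 1 -> P (A u, v)) ->
  (forall u, 0 <= u <= 1 -> P (B u, w)) ->
  A 0 = E v -> B 0 = E w ->
  exists Psi : R -> X, [/\ continuous Psi, forall y, P (Psi y, clamp v w y),
    forall x, v <= x <= w -> Psi x = E x, Psi (v - 1) = A 1 & Psi (w + 1) = B 1].
Proof.
move=> vw cE cA cB EP AP BP A0 B0; have le01 := @ler01 R.
(* on [v - 1, v] run A backwards, on [v, w] follow E, on [w, w + 1] run B *)
pose Psi y := A (clamp 0 1 (v - y)) - E v + E (clamp v w y) +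
              B (clamp 0 1 (y - w)) - E w.
have Psi_left y : y <= v -> Psi y = A (clamp 0 1 (v - y)).
  move=> yv; have yw : y - w <= 0 by lra.
  by rewrite /Psi (clamp_left y vw yv) (clamp_left _ le01 yw) B0 subrK addrK.
have Psi_mid y : v <= y <= w -> Psi y = E y.
  move=> vyw; have /andP[vy yw] := vyw.
  have vy0 : v - y <= 0 by lra.
  have yw0 : y - w <= 0 by lra.
  rewrite /Psi (clamp_id vyw) (clamp_left _ le01 yw0) (clamp_left _ le01 vy0).
  by rewrite A0 B0 subrr add0r addrK.
have Psi_right y : w <= y -> Psi y = B (clamp 0 1 (y - w)).
  move=> wy; have vy : v - y <= 0 by lra.
  rewrite /Psi (clamp_right y vw wy) (clamp_left _ le01 vy) A0.
  by rewrite subrr add0r addrC addKr.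
exists Psi; split => //.
- have cc (f : R -> R) : continuous f -> continuous (fun y => clamp 0 1 (f y)).
    by move=> cf; exact: continuous_compose cf (continuous_clamp 0 1).
  apply: continuous_subf; last exact: cst_continuous.
  apply: continuous_addf; last first.
    apply: continuous_compose cB; apply: cc.
    by apply: continuous_subf; [exact: continuous_idfun | exact: cst_continuous].
  apply: continuous_addf; last exact: continuous_compose (continuous_clamp v w) cE.
  apply: continuous_subf; last exact: cst_continuous.
  apply: continuous_compose cA; apply: cc.
  by apply: continuous_subf; [exact: cst_continuous | exact: continuous_idfun].
- move=> y; have c01 u : 0 <= clamp 0 1 u <= 1 := clamp_itv u le01.
  have [yv|vy] := lerP y v.
    by rewrite Psi_left // (clamp_left y vw yv); exact: AP.
  have [yw|wy] := lerP y w.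
    have vyw : v <= y <= w by rewrite yw ltW.
    by rewrite Psi_mid // (clamp_id vyw); exact: EP.
  by rewrite Psi_right ?(clamp_right y vw (ltW wy)); [exact: BP | exact: ltW].
- by rewrite Psi_left ?gerBl // opprB addrC subrK clamp_right.
- by rewrite Psi_right ?lerDl // addrAC subrr add0r clamp_right.
Qed.

Lemma edge_homotopy {X : normedModType R} {P : set (X * R)} {v w : R}
    {E A B : R -> X} :
  open P -> v < w -> continuous E -> continuous A -> continuous B ->
  (forall x, v <= x <= w -> P (E x, x)) ->
  (forall u, 0 <= u <= 1 -> P (A u, v)) ->
  (forall u, 0 <= u <= 1 -> P (B u, w)) ->
  A 0 = E v -> B 0 = E w ->
  exists H : R -> R -> X, [/\ continuous (fun z : R * R => H z.1 z.2),
    forall l x, v <= x <= w -> P (H l x, x),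
    forall x, v <= x <= w -> H 0 x = E x,
    H 1 v = A 1 & H 1 w = B 1].
Proof.
move=> oP vw cE cA cB EP AP BP A0 B0; have le01 := @ler01 R.
have [Psi [cPsi PsiP PsiE PsiA PsiB]] :=
  concatenated_section (ltW vw) cE cA cB EP AP BP A0 B0.
have [e e0 eP] := open_tube_segment P (fun y : R => (Psi y, clamp v w y)) (v - 1) (w + 1)
  (continuous_pair cPsi (continuous_clamp v w)) oP (fun y _ => PsiP y).
pose eta := Num.min (e / 2) (w - v).
have eta0 : 0 < eta by rewrite lt_min divr_gt0 //= subr_gt0.
have eta_e : eta < e.
  by rewrite gt_min; apply/orP; left; rewrite ltr_pdivrMr //; lra.
have eta_vw : eta <= w - v by rewrite ge_min lexx orbT.
(* H l x reads Psi at a point whose base clamp v w _ stays within eta of x *)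
exists (fun l x => Psi (x + clamp 0 1 l * tent v w eta x)); split.
- apply: continuous_compose cPsi; apply: continuous_addf; first exact: continuous_snd.
  apply: continuous_mulf.
    exact: continuous_compose continuous_fst (continuous_clamp 0 1).
  exact: continuous_compose continuous_snd (continuous_tent v w eta).
- move=> l x xvw.
  have [ybd ynear] := clamp_tent_shift eta0 xvw (clamp_itv l le01).
  set y := x + _ * _ in ybd ynear *.
  have := eP y (x - clamp v w y) ybd; rewrite /= [_ + (x - _)]addrC subrK; apply.
  by rewrite distrC; exact: lt_trans ynear eta_e.
- by move=> x xvw; rewrite clamp_left // mul0r addr0 PsiE.
- by rewrite clamp_right // mul1r tent_left.
- by rewrite clamp_right // mul1r tent_right.
Qed.

End EdgeHomotopy.

Section SectionSpaces.
Context {R : realType}.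

Lemma set_val_inj {T : Type} {A : set T} : injective (@set_val T A).
Proof. by rewrite set_valE; exact: val_inj. Qed.

Lemma set_val_incl {T : Type} {A B : set T} (h : A `<=` B) (x : set_type A) :
  set_val (Defs.incl h x) = set_val x.
Proof. by []. Qed.

Lemma continuous_point_eval {X Y : topologicalType} (p : X) :
  continuous (fun f : {compact-open, X -> Y} => f p).
Proof.
move=> f U; rewrite nbhsE; case=> O [oO Ofp] OU.
have oK : open ([set g | g @` [set p] `<=` O] : set {compact-open, X -> Y}).
  by apply: compact_open_open => //; exact: compact_set1.
have : nbhs f [set g : {compact-open, X -> Y} | g @` [set p] `<=` O].
  by apply: open_nbhs_nbhs; split => // _ [x -> <-].
by apply: filterS => g gO; apply: OU; apply: gO; exists p.
Qed.

Lemma continuous_path_eval {n : nat} {P : set ('rV[R]_n * R)} {A : set R}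
    {gam : R -> maps_sp A P} (p : set_type A) :
  {within `[0, 1]%classic, continuous gam} ->
  continuous (fun u => gam (clamp 0 1 u) p).
Proof.
move=> /(subspace_sigL_continuousP _ _) cgam.
have c01 (u : R) : `[0, 1]%classic (clamp 0 1 u).
  by rewrite /= in_itv; exact: clamp_itv ler01.
have := continuous_compose (continuous_into_subspace c01 (continuous_clamp 0 1))
  (continuous_compose cgam (continuous_point_eval p)).
by [].
Qed.

Lemma Gamma_val {n : nat} {P : set ('rV[R]_n * R)} {A : set R} {s : maps_sp A P} t :
  Gamma P A s -> set_val (s t) = ((set_val (s t)).1, set_val t).
Proof. by move=> [_ sec]; rewrite -sec -surjective_pairing. Qed.

Lemma Gamma_graph {n : nat} {P : set ('rV[R]_n * R)} {A : set R} {s : maps_sp A P} t :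
  Gamma P A s -> P ((set_val (s t)).1, set_val t).
Proof. by move=> /(Gamma_val t) <-; exact: set_valP. Qed.

Lemma continuous_at_locally_eq {T : topologicalType} {S G : R -> T} {a b x : R} :
  a < x < b -> (forall y, a < y < b -> S y = G y) -> continuous G ->
  {for x, continuous S}.
Proof.
move=> axb SG cG.
have Gx : G y @[y --> x] --> S x by rewrite SG //; exact: cG.
apply: cvg_trans Gx; apply: near_eq_cvg.
have : x \in `]a, b[ by rewrite in_itv.
by move=> /near_in_itvoo; apply: filterS => y; rewrite in_itv /= => /SG.
Qed.

End SectionSpaces.

Section FiniteExtrema.
Context {R : realType}.

Lemma finite_set_max {A : set R} {x0 : R} : finite_set A -> A x0 ->
  exists2 m, A m & forall y, A y -> y <= m.
Proof.
move=> /finite_seqP[X ->] /= Xx0; exists (\big[Num.max/x0]_(y <- X) y).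
  rewrite big_seq; apply: (big_ind (fun m => m \in X)) => // a b aX bX.
  by case: leP.
by move=> y Xy; exact: le_bigmax_seq.
Qed.

Lemma finite_set_min {A : set R} {x0 : R} : finite_set A -> A x0 ->
  exists2 m, A m & forall y, A y -> m <= y.
Proof.
move=> /finite_seqP[X ->] /= Xx0; exists (\big[Num.min/x0]_(y <- X) y).
  rewrite big_seq; apply: (big_ind (fun m => m \in X)) => // a b aX bX.
  by case: leP.
by move=> y Xy; exact: Order.TotalTheory.ge_bigmin_seq.
Qed.

End FiniteExtrema.

Definition consecutive {R : realType} (V : set R) (a b : R) :=
  [/\ V a, V b, a < b & forall x, V x -> ~ (a < x < b)].

Section LocallyFiniteVertices.
Context {R : realType} {V : set R}.
Hypothesis V_finite : forall a b : R, finite_set (V `&` `[a, b]%classic).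

Lemma greatest_vertex (Q : set R) {x v0} : (forall u, Q u -> u <= x) -> V v0 -> Q v0 ->
  exists2 m, V m /\ Q m & forall u, V u -> Q u -> u <= m.
Proof.
move=> Qx Vv0 Qv0.
have VQ_fin : finite_set (V `&` Q `&` `[v0, x]%classic).
  by apply: sub_finite_set (V_finite v0 x) => y [[Vy _] ?].
have VQv0 : (V `&` Q `&` `[v0, x]%classic) v0.
  by split; [split | rewrite /= in_itv /= lexx Qx].
have [m [[Vm Qm]]] := finite_set_max VQ_fin VQv0.
rewrite /= in_itv /= => /andP[v0m _] m_max; exists m => // u Vu Qu.
have [uv0|v0u] := lerP u v0; first exact: le_trans uv0 v0m.
by apply: m_max; split => //; rewrite /= in_itv /= (ltW v0u) Qx.
Qed.

Lemma least_vertex (Q : set R) {x v0} : (forall u, Q u -> x <= u) -> V v0 -> Q v0 ->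
  exists2 m, V m /\ Q m & forall u, V u -> Q u -> m <= u.
Proof.
move=> Qx Vv0 Qv0.
have VQ_fin : finite_set (V `&` Q `&` `[x, v0]%classic).
  by apply: sub_finite_set (V_finite x v0) => y [[Vy _] ?].
have VQv0 : (V `&` Q `&` `[x, v0]%classic) v0.
  by split; [split | rewrite /= in_itv /= lexx Qx].
have [m [[Vm Qm]]] := finite_set_min VQ_fin VQv0.
rewrite /= in_itv /= => /andP[_ mv0] m_min; exists m => // u Vu Qu.
have [v0u|uv0] := lerP v0 u; first exact: le_trans mv0 v0u.
by apply: m_min; split => //; rewrite /= in_itv /= (ltW uv0) Qx.
Qed.

End LocallyFiniteVertices.

Section CWStructure.
Context {R : realType} {V : set R}.
Hypothesis hV : CW_structure_R V.

Lemma consecutive_around x : exists a b, consecutive V a b /\ a <= x < b.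
Proof.
have [V_finite V_up V_down] := hV.
have [v0 Vv0 v0x] := V_down x; have [w0 Vw0 xw0] := V_up x.
have [a [Va ax] a_max] :=
  greatest_vertex V_finite (fun u => u <= x) (fun u ux => ux) Vv0 (ltW v0x).
have [b [Vb xb] b_min] :=
  least_vertex V_finite (fun u => x < u) (fun u xu => ltW xu) Vw0 xw0.
exists a, b; split; last by rewrite ax xb.
split=> // [|u Vu /andP[au ub]]; first exact: le_lt_trans ax xb.
have [ux|xu] := lerP u x.
  by have := a_max u Vu ux; rewrite leNgt au.
by have := b_min u Vu xu; rewrite leNgt ub.
Qed.

Lemma consecutive_left {x} : V x -> exists u, consecutive V u x.
Proof.
have [V_finite _ V_down] := hV; move=> Vx.
have [v0 Vv0 v0x] := V_down x.
have [u [Vu ux] u_max] :=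
  greatest_vertex V_finite (fun u => u < x) (fun u ux => ltW ux) Vv0 v0x.
exists u; split=> // y Vy /andP[uy yx].
by have := u_max y Vy yx; rewrite leNgt uy.
Qed.

Lemma consecutive_right {x} : V x -> exists w, consecutive V x w.
Proof.
move=> Vx; have [a [b [[Va Vb ab ab_free] /andP[ax xb]]]] := consecutive_around x.
exists b; suff -> : x = a by split.
apply/eqP; rewrite eq_le ax andbT leNgt; apply/negP => xa.
by apply: (ab_free x) => //; rewrite xa xb.
Qed.

Lemma consecutive_unique {a b a' b' y} : consecutive V a b -> consecutive V a' b' ->
  a <= y < b -> a' <= y < b' -> a = a' /\ b = b'.
Proof.
move=> [Va Vb ab ab_free] [Va' Vb' ab' ab_free'] /andP[ay yb] /andP[a'y yb'].
have between (u c d : R) : c < u < d -> (forall x, V x -> ~ (c < x < d)) -> V u -> False.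
  by move=> cud free Vu; exact: free u Vu cud.
have aa' : a = a'.
  have [aa'|a'a|//] := ltgtP a a'.
    by case: (between a' a b) => //; rewrite aa' (le_lt_trans a'y yb).
  by case: (between a a' b') => //; rewrite a'a (le_lt_trans ay yb').
split=> //; have [bb'|b'b|//] := ltgtP b b'.
  by case: (between b a' b') => //; rewrite bb' -aa' (le_lt_trans ay yb).
by case: (between b' a b) => //; rewrite b'b aa' (le_lt_trans a'y yb').
Qed.

Lemma consecutive_vertex {a b y} : consecutive V a b -> V y -> a <= y < b -> y = a.
Proof.
move=> [_ _ _ ab_free] Vy /andP[ay yb].
apply/eqP; rewrite eq_le ay andbT leNgt; apply/negP => ayl.
by apply: (ab_free y) => //; rewrite ayl yb.
Qed.

End CWStructure.

Definition point {R : realType} (v : R) : set_type [set v] := exist _ v (mem_set erefl).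

Section GluedSection.
Context {R : realType} {n : nat} {V : set R} {P : set ('rV[R]_n * R)}.
Variable sigma : forall c : set R, maps_sp c P.
Hypotheses (hV : CW_structure_R V) (oP : open P).
Hypothesis sigma_sec : forall c, closed_cell V c -> Gamma P c (sigma c).
Hypothesis sigma_comp : forall c c' (h : c' `<=` c), closed_cell V c -> closed_cell V c' ->
  same_path_component (R := R) (Gamma P c') (restr h (sigma c)) (sigma c').

Definition vertex_value v := (set_val (sigma [set v] (point v))).1.

Lemma vertex_cell {v} : V v -> closed_cell V [set v].
Proof. by left; exists v. Qed.

Lemma edge_cell {v w} : consecutive V v w -> closed_cell V `[v, w]%classic.
Proof. by case=> *; right; exists v, w. Qed.

Lemma vertex_path {c v} (h : [set v] `<=` c) : closed_cell V c -> V v ->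
  exists A : R -> 'rV[R]_n, [/\ continuous A, forall u, P (A u, v),
    A 0 = (set_val (sigma c (Defs.incl h (point v)))).1 & A 1 = vertex_value v].
Proof.
move=> cc Vv; have [gam [cgam gamG gam0 gam1]] := sigma_comp _ _ h cc (vertex_cell Vv).
exists (fun u => (set_val (gam (clamp 0 1 u) (point v))).1); split.
- apply: continuous_compose continuous_fst.
  exact: continuous_compose (continuous_path_eval (point v) cgam) (continuous_set_val _).
- move=> u; apply: (Gamma_graph (point v) (gamG _ _)).
  by rewrite /= in_itv; exact: clamp_itv ler01.
- by rewrite (clamp_left 0 ler01 (lexx 0)) gam0.
- by rewrite (clamp_right 1 ler01 (lexx 1)) gam1.
Qed.

Definition deformation_spec v w (H : R -> R -> 'rV[R]_n) :=
  [/\ continuous (fun z : R * R => H z.1 z.2),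
      forall l x, v <= x <= w -> P (H l x, x),
      forall z : set_type `[v, w]%classic,
        (set_val (sigma `[v, w]%classic z)).1 = H 0 (set_val z),
      H 1 v = vertex_value v & H 1 w = vertex_value w].

Lemma edge_deformation v w : consecutive V v w -> exists H, deformation_spec v w H.
Proof.
move=> vw_cons; have [Vv Vw vw _] := vw_cons; have vw' := ltW vw.
set c := `[v, w]%classic; have cc : closed_cell V c := edge_cell vw_cons.
have c_clamp (y : R) : c (clamp v w y) by rewrite /c /= in_itv; exact: clamp_itv.
pose r y : set_type c := exist _ (clamp v w y) (mem_set (c_clamp y)).
pose E y := (set_val (sigma c (r y))).1.
have E_val (z : set_type c) : E (set_val z) = (set_val (sigma c z)).1.
  have z_itv : v <= set_val z <= w by have := set_valP z; rewrite /c /= in_itv.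
  by rewrite /E; congr (set_val (sigma c _)).1; apply: val_inj; exact: clamp_id.
have cE : continuous E.
  have [csc _] := sigma_sec _ cc.
  apply: continuous_compose continuous_fst.
  apply: continuous_compose (continuous_set_val _).
  exact: continuous_compose (continuous_into_subspace _ (continuous_clamp v w)) csc.
have EP x : v <= x <= w -> P (E x, x).
  move=> xvw; have := Gamma_graph (r x) (sigma_sec _ cc).
  by have -> : set_val (r x) = x by exact: clamp_id.
have sub_end u : u = v \/ u = w -> [set u] `<=` c.
  by move=> uvw _ ->; rewrite /c /= in_itv /=; case: uvw => ->; rewrite lexx vw'.
have [A [cA AP A0 A1]] := vertex_path (sub_end v (or_introl erefl)) cc Vv.
have [B [cB BP B0 B1]] := vertex_path (sub_end w (or_intror erefl)) cc Vw.
have [H [cH HP H0 H1v H1w]] := edge_homotopy oP vw cE cA cB EP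
  (fun u _ => AP u) (fun u _ => BP u) ltac:(by rewrite A0 -E_val) ltac:(by rewrite B0 -E_val).
exists H; split => //; last by rewrite H1w.
- by move=> z; rewrite -E_val H0 //; have := set_valP z; rewrite /c /= in_itv.
- by rewrite H1v.
Qed.

Definition deformation v w := [get H | deformation_spec v w H].

Lemma deformationP {v w} : consecutive V v w -> deformation_spec v w (deformation v w).
Proof. by move=> vw_cons; apply: getPex; exact: edge_deformation. Qed.

Lemma continuous_deformation_end {v w} :
  consecutive V v w -> continuous (deformation v w 1).
Proof.
case/deformationP => cH _ _ _ _.
have := continuous_compose (continuous_pair (@cst_continuous R R 1) continuous_idfun) cH.
by [].
Qed.

Definition cell_of x : R * R := [get ab | consecutive V ab.1 ab.2 /\ ab.1 <= x < ab.2].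

Lemma cell_ofP x : consecutive V (cell_of x).1 (cell_of x).2 /\
  (cell_of x).1 <= x < (cell_of x).2.
Proof.
apply: (getPex (P := fun ab : R * R => consecutive V ab.1 ab.2 /\ ab.1 <= x < ab.2)).
by have [a [b ?]] := consecutive_around hV x; exists (a, b).
Qed.

Definition glued x := deformation (cell_of x).1 (cell_of x).2 1 x.

Lemma glued_edge {a b y} : consecutive V a b -> a <= y <= b ->
  glued y = deformation a b 1 y.
Proof.
move=> ab_cons /andP[ay]; rewrite /glued.
have := cell_ofP y; case: (cell_of y) => a' b' /= [ab'_cons y_in].
rewrite le_eqVlt => /orP[/eqP yb|yb]; last first.
  by have [<- <-] := consecutive_unique ab_cons ab'_cons (introT andP (conj ay yb)) y_in.
subst y; have [_ Vb _ _] := ab_cons.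
have ba' := consecutive_vertex ab'_cons Vb y_in; subst a'.
by case/deformationP: ab'_cons => _ _ _ -> _; case/deformationP: ab_cons => _ _ _ _ ->.
Qed.

Lemma glued_graph x : P (glued x, x).
Proof.
have [ab_cons /andP[ax xb]] := cell_ofP x.
by case/deformationP: ab_cons => _ HP _ _ _; apply: HP; rewrite ax ltW.
Qed.

Lemma continuous_glued : continuous glued.
Proof.
move=> x; have [a [b [ab_cons /andP[ax xb]]]] := consecutive_around hV x.
have [Va _ ab _] := ab_cons.
have [->|xa] := eqVneq x a; first last.
  have axb : a < x < b by rewrite lt_neqAle eq_sym xa ax.
  have near_eq y : a < y < b -> glued y = deformation a b 1 y.
    by move=> /andP[ay yb]; apply: (glued_edge ab_cons); rewrite (ltW ay) (ltW yb).
  exact: continuous_at_locally_eq axb near_eq (continuous_deformation_end ab_cons).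
have [u ua_cons] := consecutive_left hV Va; have [_ _ ua _] := ua_cons.
(* around a vertex, glue the two adjacent deformations, which both end at vertex_value a *)
pose G y := deformation u a 1 (Num.min y a) + deformation a b 1 (Num.max y a) -
  vertex_value a.
apply: (continuous_at_locally_eq (a := u) (b := b) (G := G)).
- by rewrite ua ab.
- move=> y /andP[uy yb]; rewrite /G; have [ya|ay] := leP y a.
    rewrite (glued_edge ua_cons) ?(ltW uy) //.
    by case/deformationP: (ab_cons) => _ _ _ -> _; rewrite addrK.
  rewrite (glued_edge ab_cons) ?(ltW ay) ?(ltW yb) //.
  by case/deformationP: (ua_cons) => _ _ _ _ ->; rewrite addrAC subrr add0r.
- apply: continuous_subf; last exact: cst_continuous.
  apply: continuous_addf.
    apply: continuous_compose (continuous_deformation_end ua_cons).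
    by apply: continuous_minf; [exact: continuous_idfun | exact: cst_continuous].
  apply: continuous_compose (continuous_deformation_end ab_cons).
  by apply: continuous_maxf; [exact: continuous_idfun | exact: cst_continuous].
Qed.

Definition glued_section : maps_sp setT P :=
  fun z => exist _ (glued (set_val z), set_val z) (mem_set (glued_graph _)).

Lemma glued_sectionE z : set_val (glued_section z) = (glued (set_val z), set_val z).
Proof. by []. Qed.

Lemma glued_sectionP : Gamma P setT glued_section.
Proof.
split=> //; apply: continuous_into_subspace.
exact: continuous_pair (continuous_compose (continuous_set_val _) continuous_glued)
  (continuous_set_val _).
Qed.

Lemma glued_section_vertex v (h : [set v] `<=` setT) : V v ->
  same_path_component (R := R) (Gamma P [set v]) (restr h glued_section) (sigma [set v]).
Proof.
move=> Vv; exists (fun _ => sigma [set v]); split=> //.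
- exact/continuous_subspaceT/cst_continuous.
- by move=> *; exact: sigma_sec (vertex_cell Vv).
apply: funext => z; apply: set_val_inj.
have -> : z = point v by apply: val_inj; exact: set_valP z.
have [w vw_cons] := consecutive_right hV Vv; have [_ _ vw _] := vw_cons.
rewrite (Gamma_val _ (sigma_sec _ (vertex_cell Vv))) /restr glued_sectionE set_val_incl.
rewrite (glued_edge vw_cons) ?lexx ?(ltW vw) //.
by case/deformationP: vw_cons => _ _ _ -> _.
Qed.

Lemma glued_section_edge v w (h : `[v, w]%classic `<=` setT) : consecutive V v w ->
  same_path_component (R := R) (Gamma P `[v, w]%classic) (restr h glued_section)
    (sigma `[v, w]%classic).
Proof.
move=> vw_cons; have [cH HP H0 _ _] := deformationP vw_cons.
set c := `[v, w]%classic; set H := deformation v w.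
have z_itv (z : set_type c) : v <= set_val z <= w by have := set_valP z; rewrite /c /= in_itv.
have KP (uz : R * set_type c) : P (H (1 - uz.1) (set_val uz.2), set_val uz.2).
  exact: HP.
pose K (uz : R * set_type c) : set_type P := exist (fun p => p \in P) _ (mem_set (KP uz)).
have KE uz : set_val (K uz) = (H (1 - uz.1) (set_val uz.2), set_val uz.2) by [].
have cK : continuous K.
  apply: continuous_into_subspace; apply: continuous_pair;
    last exact: continuous_compose continuous_snd (continuous_set_val _).
  apply: (continuous_compose (f := fun uz : R * set_type c => (1 - uz.1, set_val uz.2)) _ cH).
  apply: continuous_pair;
    last exact: continuous_compose continuous_snd (continuous_set_val _).
  by apply: continuous_subf; [exact: cst_continuous | exact: continuous_fst].
exists (fun u => curry K u : maps_sp c P); split.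
- exact/continuous_subspaceT/continuous_curry_fun.
- move=> u _; split=> //.
  exact: continuous_compose (continuous_pair (@cst_continuous _ R u) continuous_idfun) cK.
- apply: funext => z; apply: set_val_inj.
  rewrite /curry KE /restr glued_sectionE set_val_incl subr0.
  by rewrite (glued_edge vw_cons (z_itv z)).
- apply: funext => z; apply: set_val_inj.
  rewrite /curry KE subrr /H -H0.
  by rewrite -(Gamma_val _ (sigma_sec _ (edge_cell vw_cons))).
Qed.

End GluedSection.

Theorem lemmaA1 (R : realType) (n : nat) (V : set R)
  (P : set ('rV[R]_n * R))
  (hV : CW_structure_R V) (hP : open P)
  (sigma : forall c : set R, maps_sp c P)
  (hsec : forall c, closed_cell V c -> Gamma P c (sigma c))
  (hcomp : forall c c' (h : c' `<=` c), closed_cell V c -> closed_cell V c' ->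
     same_path_component (R := R) (Gamma P c') (restr h (sigma c)) (sigma c')) :
  exists2 s : maps_sp setT P, Gamma P setT s &
    forall c (h : c `<=` setT), closed_cell V c ->
      same_path_component (R := R) (Gamma P c) (restr h s) (sigma c).
Proof.
exists (glued_section sigma hV hP hsec hcomp).
  exact: glued_sectionP.
move=> c h [[v Vv c_v]|[v [w [Vv Vw vw vw_free c_vw]]]]; subst c.
  exact: glued_section_vertex.
by apply: glued_section_edge; split.
Qed.
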